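(* Let $a>1$ be an integer, and define the sequence $(u_i)_{i\geq 0}$ by $u_0=0$, $u_1=1$, and $u_{i+1}=au_i+u_{i-1}$ for $i=1,2,3,\ldots$. Then no integer $x$ can be written as $x=u_m+au_n$ with $m\in\{0,1,2,\ldots\}$ and $n\in\{1,2,3,\ldots\}$ in two or more different ways (i.e., for two distinct pairs $(m,n)$), except in the case $a=2$ and $x=4=u_0+au_2=u_2+au_1$. *)

From mathcomp Require Import all_boot.

Fixpoint u (a : nat) (i : nat) : nat :=
  match i with
  | 0 => 0
  | S j => match j with
           | 0 => 1
           | S k => a * u a j + u a k
           end
  end.

From mathcomp Require Import all_boot zify.

(* Since [u] is strictly increasing, two
   representations with [n' < n] force [m'] to lie near [n]: for [m' >= n + 2]
   the right-hand side is too large, because [u m + a u n < u (p + 2)] whenever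
   [m <= p + 1] and [n <= p]; for [m' = n + 1] the recurrence reduces the equation
   to [u m = u (n - 1) + a u n'], which has no solution; and for [m' <= n]
   expanding [u n] by the recurrence leaves [(a^2 - 2a) u (n - 1) + (a - 1) u (n - 2)
   + u m <= 0], whence [a = 2], [n = 2], [m = 0]. *)

Section Representations.

Variable a : nat.
Hypothesis a_gt1 : 1 < a.

Local Notation u := (u a).

Lemma uSS i : u i.+2 = a * u i.+1 + u i.
Proof. by []. Qed.

Lemma u_ltnS i : u i < u i.+1.
Proof.
case: i => // i; elim: i => [|i IH]; first by rewrite /=; lia.
by rewrite [u i.+3]uSS; nia.
Qed.

Lemma u_leq : {mono u : i j / i <= j}.
Proof. exact/leq_mono/(homo_ltn ltn_trans u_ltnS). Qed.

Lemma u_ltn : {mono u : i j / i < j}.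
Proof. exact/leqW_mono/u_leq. Qed.

Lemma u_inj : injective u.
Proof. exact/incn_inj/u_leq. Qed.

Lemma swap_scale_lt {x y} : x < y -> y + a * x < a * y + x.
Proof. by nia. Qed.

Lemma rep_lt_u m n p : m <= p.+1 -> n <= p -> u m + a * u n < u p.+2.
Proof.
rewrite -(u_leq m) -(u_leq n) uSS => le_m le_n.
exact: leq_ltn_trans (leq_add le_m (leq_mul (leqnn a) le_n)) (swap_scale_lt (u_ltnS p)).
Qed.

Lemma u_neq_rep m p n' : 0 < n' <= p -> u m <> u p + a * u n'.
Proof.
case/andP=> n'_gt0 le_n'.
have u_n'_gt0 : 0 < u n' by rewrite -[0]/(u 0) u_ltn.
case: (ltngtP m p.+1) => [lt_m | gt_m | ->] e.
- by move: lt_m; rewrite ltnS -u_leq e; nia.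
- by have := rep_lt_u p n' p (leqnSn p) le_n'; move: gt_m; rewrite -(u_leq p.+2) e; lia.
case: p le_n' e => [|r]; first by rewrite leqNgt n'_gt0.
rewrite leq_eqVlt ltnS uSS => /predU1P[-> | le_n'] e; first by have := u_ltnS r; lia.
have := swap_scale_lt (u_ltnS r); move: le_n'; rewrite -u_leq; nia.
Qed.

Lemma rep_high_neq m n m' n' : n' < n -> n.+2 <= m' ->
  u m + a * u n <> u m' + a * u n'.
Proof.
move=> lt_n le_m' e.
have lt_un : a * u n' < a * u n by rewrite ltn_pmul2l ?u_ltn //; lia.
have lt_m : m < m' by rewrite -u_ltn; lia.
case: m' le_m' lt_m e => [|[|p]] // le_m' lt_m e.
by have := rep_lt_u m n p lt_m le_m'; lia.
Qed.

Lemma rep_low_eq m n m' n' : 0 < n' < n -> m' <= n ->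
  u m + a * u n = u m' + a * u n' -> [/\ a = 2, m = 0 & n = 2].
Proof.
case/andP=> n'_gt0 lt_n le_m' e.
case: n lt_n le_m' e => [|[|q]] //; first by case: n' n'_gt0.
rewrite ltnS -(u_leq n') -(u_leq m') => le_n' le_m' e.
have u_q1_gt0 : 0 < u q.+1 by rewrite -[0]/(u 0) u_ltn.
have bound : u m + a * (a * u q.+1 + u q) <= a * u q.+1 + u q + a * u q.+1.
  by rewrite -uSS e leq_add // leq_mul.
have a2 : a = 2 by move: bound u_q1_gt0 a_gt1; clear; nia.
have u_q0 : u q = 0 by move: bound a2; clear; nia.
have u_m0 : u m = 0 by move: bound a2; clear; nia.
by rewrite a2 (u_inj q 0 u_q0) (u_inj m 0 u_m0).
Qed.

Lemma rep_uniq m n m' n' : 0 < n' < n ->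
  u m + a * u n = u m' + a * u n' -> [/\ a = 2, m = 0 & n = 2].
Proof.
move=> /[dup] /andP[n'_gt0 lt_n] n'_bounds e.
case: (ltngtP m' n.+1) => [lt_m' | gt_m' | m'_eq].
- exact: rep_low_eq m n m' n' n'_bounds lt_m' e.
- by case: (rep_high_neq m n m' n' lt_n gt_m' e).
case: n lt_n n'_bounds e m'_eq => [|p] // lt_n _ e m'_eq.
rewrite m'_eq uSS in e.
case: (u_neq_rep m p n'); first by rewrite n'_gt0 -ltnS.
lia.
Qed.

End Representations.

Theorem theorem1p2 (a : nat) (ha : 1 < a) (x m n m' n' : nat) :
  0 < n -> 0 < n' -> (m, n) <> (m', n') ->
  x = u a m + a * u a n -> x = u a m' + a * u a n' ->
  a = 2 /\ x = 4.
Proof.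
move=> n_gt0 n'_gt0 ne -> e.
case: (ltngtP n n') => [lt_n | gt_n | eq_n].
- have bounds : 0 < n < n' by rewrite n_gt0.
  have [a2 m'0 n'2] := rep_uniq a ha m' n' m n bounds (esym e).
  by rewrite e a2 m'0 n'2.
- have bounds : 0 < n' < n by rewrite n'_gt0.
  have [a2 m0 n2] := rep_uniq a ha m n m' n' bounds e.
  by rewrite a2 m0 n2.
have /(u_inj a ha) eq_m : u a m = u a m' by rewrite eq_n in e; lia.
by case: ne; rewrite eq_m eq_n.
Qed.
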